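(* Let $\mathbf b=b_0b_1b_2\cdots\in\{1,-1\}^{\mathbb N}$. For each $t\ge2$ and $1\le u<t$, the vector \[V:=\sum_{p=0}^{2^{t-u}-1}\Delta(\ell_{t-1}+2^u p,\;2^u,\;2^{t-u})\] is a constant vector (all its $2^{t-u}$ entries are equal).
   Context: For integers $a$ and $N\ge1$, $(a \bmod N)$ denotes the unique integer in $\{0,\dots,N-1\}$ congruent to $a$ modulo $N$; we write $a\succ c \pmod N$ iff $(a\bmod N)>(c\bmod N)$. For $b\in\{-1,1\}$, $k\ge0$ and integers $0\le\ell\le n$, let $\varepsilon_{k,b}(\ell,n)=1$ if $n-\ell \succ (2+b)\cdot 2^k-(\ell+1) \pmod{2^{k+2}}$ and $\varepsilon_{k,b}(\ell,n)=0$ otherwise. For $s\ge0$, $d,m\ge1$, $\mathcal E_{k,b}(s,d,m)=\big(\varepsilon_{k,b}(s+jd,s+(j+1)d)\big)_{j=0}^{m-1}$ and $\Delta(s,d,m)=\sum_{k=0}^\infty\mathcal E_{k,b_k}(s,d,m)$. For $x_0,x_1,x_2,x_3\in\{1,-1\}$, $\ell(x_0,x_1,x_2,x_3)$ is given by the table (listing $(x_0,x_1,x_2,x_3)\mapsto \ell$): $(1,1,1,1)\mapsto7$, $(-1,1,1,1)\mapsto1$, $(1,-1,1,1)\mapsto3$, $(-1,-1,1,1)\mapsto5$, $(1,1,-1,1)\mapsto7$, $(-1,1,-1,1)\mapsto9$, $(1,-1,-1,1)\mapsto11$, $(-1,-1,-1,1)\mapsto5$, $(1,1,1,-1)\mapsto23$,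 $(-1,1,1,-1)\mapsto1$, $(1,-1,1,-1)\mapsto3$, $(-1,-1,1,-1)\mapsto21$, $(1,1,-1,-1)\mapsto23$, $(-1,1,-1,-1)\mapsto9$, $(1,-1,-1,-1)\mapsto11$, $(-1,-1,-1,-1)\mapsto21$. For $t\ge0$, $\ell_t:=2^t\,\ell(b_t,b_{t+1},b_{t+2},b_{t+3})$. *)

From HB Require Import structures.
From mathcomp Require Import all_boot all_order all_algebra.
From mathcomp Require Import zify.
Set Implicit Arguments. Unset Strict Implicit. Unset Printing Implicit Defensive.
Import Order.TTheory GRing.Theory Num.Theory.
Local Open Scope ring_scope.

Definition succ_mod (N : int) (a c : int) : bool := (c %% N)%Z < (a %% N)%Z.

Definition eps (k : nat) (b : int) (l n : int) : bool :=
  succ_mod (2 ^+ (k + 2)) (n - l) ((2 + b) * 2 ^+ k - (l + 1)).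

Lemma eps_vanish (k : nat) (b : int) (l n : nat) :
  (b = 1 \/ b = -1) -> (l <= n)%N -> (n < k)%N -> eps k b l%:Z n%:Z = false.
Proof.
move=> hb hln hnk.
have h2k : (n < 2 ^ k)%N by apply: leq_trans hnk (ltnW (ltn_expl _ _)).
rewrite /eps /succ_mod exprD.
have hP : (n%:Z < (2 : int) ^+ k).
  rewrite -(natrX int 2 k) -natz. lia.
set P := (2 : int) ^+ k in hP *.
have -> : (2 : int) ^+ 2 = 4 by [].
rewrite (@modz_small (n%:Z - l%:Z)); last by lia.
rewrite modz_small; last by case: hb => ->; lia.
by apply/negbTE; rewrite -leNgt; case: hb => ->; lia.
Qed.

Definition ell (x0 x1 x2 x3 : int) : nat :=
  match x0 == 1, x1 == 1, x2 == 1, x3 == 1 with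
  | true,  true,  true,  true  => 7
  | false, true,  true,  true  => 1
  | true,  false, true,  true  => 3
  | false, false, true,  true  => 5
  | true,  true,  false, true  => 7
  | false, true,  false, true  => 9
  | true,  false, false, true  => 11
  | false, false, false, true  => 5
  | true,  true,  true,  false => 23
  | false, true,  true,  false => 1
  | true,  false, true,  false => 3
  | false, false, true,  false => 21
  | true,  true,  false, false => 23
  | false, true,  false, false => 9
  | true,  false, false, false => 11
  | false, false, false, false => 21
  end.

Definition ellt (b : nat -> int) (t : nat) : nat :=
  (2 ^ t * ell (b t) (b t.+1) (b t.+2) (b t.+3))%N.

Definition Evec (k : nat) (bk : int) (s d m : nat) : 'rV[int]_m :=
  \row_(j < m) ((eps k bk (s + j * d)%N%:Z (s + j.+1 * d)%N%:Z) : int).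

(* Delta(s,d,m) = sum_{k>=0} E_{k,b_k}(s,d,m).  By eps_vanish, every term with
   k > s + m*d is the zero vector (all its entries have l <= n <= s+m*d < k),
   so the infinite sum equals the finite sum over k <= s + m*d. *)
Definition Delta (b : nat -> int) (s d m : nat) : 'rV[int]_m :=
  \sum_(k < (s + m * d).+1) Evec k (b k) s d m.

From mathcomp Require Import all_boot all_order all_algebra.
From mathcomp Require Import zify ring.
Import GRing.Theory Num.Theory.
Local Open Scope ring_scope.

(* Entry j of the sum is \sum_p h (p + j), where h q counts the levels k at
   which eps fires on the step of length 2^u starting at l_{t-1} + 2^u q; so the
   vector is constant as soon as h (q + 2^(t-u)) = h q for q + 1 < 2^(t-u), i.e.
   as soon as shifting such a step by 2^t does not change the count.  A level
   k <= t-2 only sees positions modulo 2^(k+2), which divides 2^t.  At a level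
   k = t-1+i, after dividing out 2^u, eps fires only when q + 1 = 2^(t-1-u), and
   then exactly when eps_i fires on the unit step (l, l+1), resp. (l+2, l+3)
   after the shift, with l = l(b_{t-1}, .., b_{t+2}); the table l is designed
   so that these two counts agree. *)

Lemma Posz2X (n : nat) : Posz (2 ^ n) = 2 ^+ n.
Proof. by rewrite -natz natrX. Qed.

Lemma modz_lt_dvdz (N d c : int) : 0 < N -> 0 < d -> (d %| N)%Z -> (d %| c + 1)%Z ->
  ((c %% N)%Z < d) = (N %| c + 1 - d)%Z.
Proof.
move=> N_gt0 d_gt0 /dvdzP[N' eN] /dvdzP[C eC].
have r_ge0 : 0 <= (c %% N)%Z by apply: modz_ge0; exact: lt0r_neq0.
have r_ltN : (c %% N)%Z < N by rewrite ltz_pmod.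
have ec := divz_eq c N.
move: (c %/ N)%Z (c %% N)%Z ec r_ge0 r_ltN => q r ec r_ge0 r_ltN.
have [s es] : exists s, r + 1 = s * d.
  by exists (C - q * N'); rewrite mulrBl -mulrA -eN; lia.
apply/idP/dvdzP => [r_ltd | [w ew]].
- have s1 : s = 1 by nia.
  by exists q; lia.
- have s_le : s <= N' by nia.
  have ews : (w - q) * N' * d = (s - 1) * d by nia.
  have {}ews : (w - q) * N' = s - 1 by apply: (mulIf (lt0r_neq0 d_gt0)).
  have s_ge1 : 1 <= s by nia.
  have wq : w - q = 0 by nia.
  have s1 : s = 1 by nia.
  lia.
Qed.

Lemma eps_translate (k : nat) (bk l n s : int) : (2 ^+ (k + 2) %| s)%Z ->
  eps k bk (l + s) (n + s) = eps k bk l n.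
Proof.
case/dvdzP=> q ->; rewrite /eps /succ_mod.
have -> : n + q * 2 ^+ (k + 2) - (l + q * 2 ^+ (k + 2)) = n - l by ring.
have -> : (2 + bk) * 2 ^+ k - (l + q * 2 ^+ (k + 2) + 1)
        = (- q) * 2 ^+ (k + 2) + ((2 + bk) * 2 ^+ k - (l + 1)) by ring.
by rewrite modzMDl.
Qed.

Lemma eps_step (k u : nat) (bk X : int) : (u <= k)%N -> (2 ^+ u %| X)%Z ->
  eps k bk X (X + 2 ^+ u) = (2 ^+ (k + 2) %| (2 + bk) * 2 ^+ k - X - 2 ^+ u)%Z.
Proof.
move=> le_uk dvd_uX; rewrite /eps /succ_mod.
have -> : X + 2 ^+ u - X = 2 ^+ u by ring.
have lt_uk2 : 2 ^+ u < 2 ^+ (k + 2) :> int by rewrite ltr_eXn2l //; lia.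
rewrite [(2 ^+ u %% _)%Z]modz_small ?exprn_ge0 ?lt_uk2 //.
rewrite modz_lt_dvdz ?exprn_gt0 //.
- by congr (_ %| _)%Z; ring.
- by apply: dvdz_exp2l; lia.
- rewrite opprD addrA subrK rpredB // dvdz_mull //.
  exact: dvdz_exp2l.
Qed.

Lemma dvdz_mulB_lt2 (f M Y J : int) : 0 < f -> 0 < J < 2 * f ->
  (f * M %| f * Y - J)%Z = (J == f) && (M %| Y - 1)%Z.
Proof.
move=> f_gt0 /andP[J_gt0 J_lt2f].
have f_neq0 : f != 0 by rewrite lt0r_neq0.
have [-> | neq_Jf] /= := eqVneq J f.
  by rewrite -{2}[f]mulr1 -mulrBr dvdz_mul2l.
apply/negP => /(dvdz_trans (dvdz_mulr M (dvdzz f))) dvd_fJ.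
have /dvdzP[q eJ] : (f %| J)%Z.
  have -> : J = f * Y - (f * Y - J) by ring.
  by rewrite rpredB // dvdz_mulr.
suff q1 : q = 1 by rewrite eJ q1 mul1r eqxx in neq_Jf.
nia.
Qed.

Lemma eps_rescale (u a i A j : nat) (bk : int) : (j.+1 < 2 ^ a.+1)%N ->
  eps (u + a + i) bk (2 ^ (u + a) * A + 2 ^ u * j)%N (2 ^ (u + a) * A + 2 ^ u * j.+1)%N
  = (j.+1 == 2 ^ a)%N && eps i bk A A.+1.
Proof.
move=> lt_j; rewrite !PoszD !PoszM !Posz2X.
have -> : Posz A.+1 = A%:Z + 2 ^+ 0 by rewrite expr0 intS addrC.
have -> : 2 ^+ (u + a) * A%:Z + 2 ^+ u * j.+1%:Z
        = 2 ^+ (u + a) * A%:Z + 2 ^+ u * j%:Z + 2 ^+ u by rewrite intS; ring.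
rewrite !eps_step ?dvdzz //; last first.
- by rewrite exprD -mulrA rpredD // dvdz_mulr.
- lia.
have -> : 2 ^+ (u + a + i + 2) = 2 ^+ u * (2 ^+ a * 2 ^+ (i + 2)) :> int.
  by rewrite -!exprD; congr (_ ^+ _); lia.
have -> : (2 + bk) * 2 ^+ (u + a + i) - (2 ^+ (u + a) * A%:Z + 2 ^+ u * j%:Z) - 2 ^+ u
        = 2 ^+ u * (2 ^+ a * ((2 + bk) * 2 ^+ i - A%:Z) - j.+1%:Z).
  by rewrite intS !exprD; ring.
rewrite dvdz_mul2l ?expf_neq0 // dvdz_mulB_lt2 ?exprn_gt0 //; last first.
  by rewrite -exprS -Posz2X ltz_nat.
by rewrite expr0 -Posz2X eqz_nat.
Qed.

Lemma eps_unit_vanish (i A : nat) (bk : int) : (A.+1 < 2 ^ i)%N -> eps i bk A A.+1 = false.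
Proof.
move=> lt_A; have -> : Posz A.+1 = A%:Z + 2 ^+ 0 by rewrite expr0 intS addrC.
rewrite eps_step ?dvd1z // expr0.
apply/negP => /(dvdz_trans (dvdz_exp2l 2 (leq_addr 2 i))) dvd_iA.
have : (2 ^+ i %| A%:Z + 1)%Z.
  have -> : A%:Z + 1 = (2 + bk) * 2 ^+ i - ((2 + bk) * 2 ^+ i - A%:Z - 1) by ring.
  by rewrite rpredB // dvdz_mull.
by rewrite -Posz2X addrC -intS dvdzE /= => /dvdn_leq; lia.
Qed.

Lemma ell_le23 (x0 x1 x2 x3 : int) : (ell x0 x1 x2 x3 <= 23)%N.
Proof.
by rewrite /ell; case: (x0 == 1); case: (x1 == 1); case: (x2 == 1); case: (x3 == 1).
Qed.

(* Levels i >= 5 never fire since l + 3 < 2^5; the first five are checked case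
   by case. *)
Lemma ell_eps_balance (bb : nat -> int) (N : nat) :
  (forall i, bb i = 1 \/ bb i = -1) -> (5 <= N)%N ->
  let l := ell (bb 0%N) (bb 1%N) (bb 2%N) (bb 3%N) in
  \sum_(i < N) (eps i (bb i) l l.+1 : int) = \sum_(i < N) (eps i (bb i) l.+2 l.+3 : int).
Proof.
move=> hbb le5N l; rewrite -(subnKC le5N) !big_split_ord /=.
have l_le : (l <= 23)%N by apply: ell_le23.
have vanish A : (A.+1 < 2 ^ 5)%N ->
    \sum_(i < N - 5) (eps (5 + i) (bb (5 + i)%N) A A.+1 : int) = 0.
  move=> lt_A; apply: big1 => i _; rewrite eps_unit_vanish //.
  by rewrite expnD (leq_trans lt_A) // leq_pmulr ?expn_gt0.
rewrite !vanish ?addr0; try lia.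
clear l_le; rewrite !big_ord_recr !big_ord0 /= /l.
by case: (hbb 0%N) => ->; case: (hbb 1%N) => ->; case: (hbb 2%N) => ->;
  case: (hbb 3%N) => ->; case: (hbb 4%N) => ->.
Qed.

Definition eps_sum (b : nat -> int) (l n : nat) : int :=
  \sum_(k < n.+1) (eps k (b k) l n : int).

Section EpsSum.
Variable b : nat -> int.
Hypothesis hb : forall i, b i = 1 \/ b i = -1.

Lemma eps_sum_widen (N l n : nat) : (l <= n)%N -> (n < N)%N ->
  \sum_(k < N) (eps k (b k) l n : int) = eps_sum b l n.
Proof.
move=> le_ln lt_nN; rewrite -(subnKC lt_nN) big_split_ord /=.
by rewrite [X in _ + X]big1 ?addr0 // => k _; rewrite eps_vanish //; lia.
Qed.

Lemma Delta_entry (s d m : nat) (i : 'I_1) (j : 'I_m) :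
  Delta b s d m i j = eps_sum b (s + j * d) (s + j.+1 * d).
Proof.
rewrite /Delta summxE; under eq_bigr do rewrite mxE.
by apply: eps_sum_widen; have := ltn_ord j; nia.
Qed.

Lemma eps_sum_shift (u a j : nat) : (j.+2 <= 2 ^ a.+1)%N ->
  let x := (ellt b (u + a) + 2 ^ u * j)%N in
  eps_sum b (x + 2 ^ (u + a).+1) (x + 2 ^ (u + a).+1 + 2 ^ u) = eps_sum b x (x + 2 ^ u).
Proof.
move=> lt_j x.
set l := ell (b (u + a)) (b (u + a).+1) (b (u + a).+2) (b (u + a).+3).
have ex : x = (2 ^ (u + a) * l + 2 ^ u * j)%N by [].
pose N := (u + a + (5 + (x + 2 ^ (u + a).+1 + 2 ^ u)))%N.
rewrite -!(@eps_sum_widen N); try lia.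
rewrite !(@big_split_ord _ _ _ (u + a)%N) /=; congr (_ + _).
  (* Below level u + a, the shift 2^(u+a+1) is a multiple of the modulus. *)
  apply: eq_bigr => k _.
  rewrite -addnA [(2 ^ _ + _)%N]addnC addnA !PoszD Posz2X eps_translate //.
  by apply: dvdz_exp2l; have := ltn_ord k; lia.
have -> : (x + 2 ^ (u + a).+1 = 2 ^ (u + a) * l.+2 + 2 ^ u * j)%N.
  by rewrite ex expnS; lia.
have -> : (2 ^ (u + a) * l.+2 + 2 ^ u * j + 2 ^ u
          = 2 ^ (u + a) * l.+2 + 2 ^ u * j.+1)%N by lia.
have -> : (x + 2 ^ u = 2 ^ (u + a) * l + 2 ^ u * j.+1)%N by rewrite ex; lia.
rewrite ex; under eq_bigr do rewrite eps_rescale //.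
under [RHS]eq_bigr do rewrite eps_rescale //.
case: eqP => _ /=; last by rewrite !big1.
have := @ell_eps_balance (fun i => b (u + a + i)%N) (5 + _)%N (fun i => hb _)
  (leq_addr _ _).
by rewrite /= addn0 addn1 addn2 addn3 => ->.
Qed.

End EpsSum.

Lemma sum_window_shift (V : zmodType) (m : nat) (h : nat -> V) :
  (forall j, (j.+1 < m)%N -> h (j + m)%N = h j) ->
  forall j, (j < m)%N -> \sum_(p < m) h (p + j)%N = \sum_(p < m) h p.
Proof.
move=> h_per; elim=> [|j IH] lt_jm; first by apply: eq_bigr => p _; rewrite addn0.
rewrite -IH 1?ltnW //.
case: m h_per lt_jm {IH} => [//|m] h_per lt_jm.
rewrite big_ord_recr big_ord_recl addrC /=; congr (_ + _).
  by apply: eq_bigr => p _; rewrite /bump leq0n add1n addSnnS.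
by rewrite add0n -(h_per j) // !addnS addnC.
Qed.

Theorem lemma5p3 (b : nat -> int) (hb : forall i, b i = 1 \/ b i = -1)
  (t u : nat) (ht : (2 <= t)%N) (hu1 : (1 <= u)%N) (hut : (u < t)%N) :
  exists c : int,
    \sum_(p < 2 ^ (t - u)) Delta b (ellt b t.-1 + 2 ^ u * p) (2 ^ u) (2 ^ (t - u))
    = const_mx c.
Proof.
have [a e_t] : exists a, t = (u + a).+1 by exists (t - u).-1; lia.
have -> : (t - u = a.+1)%N by lia.
subst t; rewrite [(u + a).+1.-1]/=.
pose h q := eps_sum b (ellt b (u + a) + 2 ^ u * q) (ellt b (u + a) + 2 ^ u * q + 2 ^ u).
exists (\sum_(p < 2 ^ a.+1) h p).
apply/matrixP => i j; rewrite mxE summxE -(@sum_window_shift _ _ h _ j (ltn_ord j)).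
  apply: eq_bigr => p _; rewrite (Delta_entry _ hb) /h.
  by congr eps_sum; nia.
move=> q lt_q; rewrite /h mulnDr -expnD addnS !addnA.
exact: (eps_sum_shift _ hb).
Qed.
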